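(* Every matroid of finite rank is unionable: if $F$ is a matroid of finite rank and $N$ is any matroid, then $F\vee N$ is a matroid.
   Context: Matroids (possibly infinite) $(E,\mathcal{L})$: $\emptyset\in\mathcal{L}$; subsets of independent sets are independent; if $B$ is maximal in $\mathcal{L}$ and $A\in\mathcal{L}$ is not maximal, then $A\cup\{b\}\in\mathcal{L}$ for some $b\in B\setminus A$; for $A\in\mathcal{L}$ and $A\subseteq X\subseteq E$, $\{S\in\mathcal{L}:A\subseteq S\subseteq X\}$ has a maximal element. The rank is the cardinality of a base (maximal independent set). The union $F\vee N$ has ground set $E(F)\cup E(N)$ and independent sets $\{S\cup T: S\in\mathcal{L}(F),\ T\in\mathcal{L}(N)\}$. A matroid $F$ is unionable if $F\vee N$ is a matroid for every matroid $N$. *)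

From mathcomp Require Import all_boot.
From mathcomp Require Import boolp classical_sets cardinality.
Set Implicit Arguments. Unset Strict Implicit. Unset Printing Implicit Defensive.
Local Open Scope classical_set_scope.

Definition maximal_in (T : Type) (Fam : set (set T)) (B : set T) : Prop :=
  Fam B /\ (forall S, Fam S -> B `<=` S -> S = B).

Record is_matroid (T : Type) (E : set T) (L : set (set T)) : Prop := {
  indep_sub_ground : forall S, L S -> S `<=` E;
  indep_empty : L set0;
  indep_subset : forall S S', L S -> S' `<=` S -> L S';
  indep_augment : forall A B, maximal_in L B -> L A -> ~ maximal_in L A ->
      exists b, B b /\ ~ A b /\ L (A `|` [set b]);
  indep_max : forall A X, L A -> A `<=` X -> X `<=` E ->
      exists M, maximal_in [set S | L S /\ A `<=` S /\ S `<=` X] M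
}.

Definition is_base (T : Type) (L : set (set T)) (B : set T) : Prop := maximal_in L B.

Definition finite_rank (T : Type) (L : set (set T)) : Prop :=
  exists B, is_base L B /\ finite_set B.

Definition union_indep (T : Type) (L1 L2 : set (set T)) : set (set T) :=
  [set I | exists S U, L1 S /\ L2 U /\ I = S `|` U].

From mathcomp Require Import all_boot.
From mathcomp Require Import boolp classical_sets cardinality.
Set Implicit Arguments. Unset Strict Implicit. Unset Printing Implicit Defensive.
Local Open Scope classical_set_scope.

(* Write an independent set of [F \/ N] as a disjoint union of an F-independent
   part and an N-independent part; finite rank of F bounds the F-part uniformly.
   A split can be changed one element at a time (decreasing a finite count of
   misplaced elements) until its parts span the respective parts of any split set
   that the whole set spans; augmentation then follows by counting, from the
   transitivity of span and the exchange inequality |K \ J| <= |J \ K|. For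
   maximal sets, take a candidate whose N-defect (the number of deletions making
   it N-independent, bounded by the rank of F) is largest and extend its N-part to
   an N-basis: no further element can be added without lowering the defect. *)

Section Atmost.
Variable T : Type.
Implicit Types (A B D X Y : set T).

Fixpoint atmost D n : Prop :=
  match n with
  | 0 => forall x, ~ D x
  | m.+1 => forall x, D x -> atmost (D `\ x) m
  end.

Lemma atmost0 D : atmost D 0 = forall x, ~ D x.
Proof. by []. Qed.

Lemma atmostS D n : atmost D n.+1 = forall x, D x -> atmost (D `\ x) n.
Proof. by []. Qed.

Lemma sub_atmost D D' n : atmost D n -> D' `<=` D -> atmost D' n.
Proof.
elim: n D D' => [|n IH] D D' + D'D; first by rewrite !atmost0 => Dn x /D'D /Dn.
rewrite !atmostS => Dn x /[dup] D'x /D'D /Dn /IH; apply => y [D'y yx].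
by split; [exact: D'D|].
Qed.

Lemma atmostD1 D n z :
  atmost D n -> D z -> exists2 m, n = m.+1 & atmost (D `\ z) m.
Proof.
case: n => [|m]; rewrite ?atmost0 ?atmostS => Dn Dz; first by case: (Dn z).
by exists m; last exact: Dn.
Qed.

Lemma atmostSn D n : atmost D n -> atmost D n.+1.
Proof.
elim: n D => [|n IH] D; first by rewrite atmost0 atmostS => Dn x /Dn.
by rewrite [atmost D n.+1]atmostS atmostS => Dn x /Dn /IH.
Qed.

Lemma atmost_leq D n m : n <= m -> atmost D n -> atmost D m.
Proof.
move=> /subnKC <-; elim: (m - n) => [|k IH] Dn; first by rewrite addn0.
by rewrite addnS; apply/atmostSn/IH.
Qed.

Lemma atmostU1 D n a : atmost D n -> atmost (D `|` [set a]) n.+1.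
Proof.
elim: n D => [|n IH] D Dn; rewrite atmostS => x Dax.
  rewrite atmost0 in Dn; case: Dax => [/Dn //|->].
  by rewrite atmost0 => y [[/Dn|]].
have [->|xa] := pselect (x = a).
  by apply: (sub_atmost Dn) => y [[//|ya] /(_ ya)].
have Dx : D x by case: Dax.
rewrite atmostS in Dn; apply: (sub_atmost (IH _ (Dn x Dx))).
by move=> y [[Dy|ya] yx]; [left|right].
Qed.

Lemma atmostU A B a b : atmost A a -> atmost B b -> atmost (A `|` B) (a + b).
Proof.
elim: b B => [|b IH] B Aa Bb.
  by rewrite addn0 atmost0 in Bb *; apply: (sub_atmost Aa) => x [//|/Bb].
have [[x Bx]|B0] := pselect (exists x, B x).
  rewrite atmostS in Bb; rewrite addnS.
  apply: (sub_atmost (atmostU1 (a := x) (IH _ Aa (Bb x Bx)))) => y [Ay|By].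
    by left; left.
  by have [->|yx] := pselect (y = x); [right|left; right].
apply: (atmost_leq (leq_addr b.+1 a)); apply: (sub_atmost Aa) => x [//|Bx].
by case: B0; exists x.
Qed.

Lemma finite_atmost D : finite_set D -> exists n, atmost D n.
Proof.
move=> /finite_set_leP[n /pcard_leP /injfunPex[f fD finj]]; exists n.
suff atmost_below k : atmost [set y | D y /\ f y < k] k.
  by apply: (sub_atmost (atmost_below n)) => y Dy; split => //; exact: fD.
elim: k => [|k IH]; first by rewrite atmost0 => y [].
have [[y0 [Dy0 fy0]]|nok] := pselect (exists y, D y /\ f y = k).
  apply: (sub_atmost (atmostU1 (a := y0) IH)) => y [Dy].
  rewrite ltnS leq_eqVlt => /orP[/eqP fyk|]; last by left.
  by right; apply: finj; rewrite ?inE // fyk fy0.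
apply: atmostSn; apply: (sub_atmost IH) => y [Dy].
rewrite ltnS leq_eqVlt => /orP[/eqP fyk|//].
by case: nok; exists y.
Qed.

Lemma atmost_descent D n :
  atmost D n -> ~ (forall p, atmost D p -> exists2 q, p = q.+1 & atmost D q).
Proof.
move=> Dn descent; elim: n Dn => [|n IH] /descent[q] // [<-].
exact: IH.
Qed.

(* [card_le X Y] holds vacuously when [Y] is infinite. *)
Definition card_le X Y := forall n, atmost Y n -> atmost X n.

Lemma subset_card_le X Y : X `<=` Y -> card_le X Y.
Proof. by move=> XY n /sub_atmost; apply. Qed.

Lemma card_le_trans Y X Z : card_le X Y -> card_le Y Z -> card_le X Z.
Proof. by move=> XY YZ n /YZ /XY. Qed.

Lemma card_le_setD1 X Y z n : Y z -> card_le Y X -> card_le X (Y `\ z) -> ~ atmost X n.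
Proof.
move=> Yz YX XY Xn; apply: (atmost_descent Xn) => p /YX Yp.
by have [q -> /XY Xq] := atmostD1 Yp Yz; exists q.
Qed.

Lemma card_le_cycle X1 Y1 X2 Y2 z n : card_le Y1 X1 -> card_le Y2 X2 ->
  X1 `<=` Y2 `\ z -> X2 `<=` Y1 `\ z -> Y1 z \/ Y2 z -> ~ atmost X1 n.
Proof.
move=> YX1 YX2 XY12 XY21 + X1n.
have drop X Y : X `<=` Y `\ z -> card_le X Y.
  by move=> XY; apply: subset_card_le => x /XY[].
case=> [Y1z|Y2z].
  apply: (card_le_setD1 Y1z YX1 _ X1n).
  exact: card_le_trans (drop _ _ XY12) (card_le_trans YX2 (subset_card_le XY21)).
apply: (card_le_setD1 Y2z YX2 _ (drop _ _ XY21 _ (YX1 _ X1n))).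
exact: card_le_trans (drop _ _ XY21) (card_le_trans YX1 (subset_card_le XY12)).
Qed.

End Atmost.

Definition span T (L : set (set T)) (P : set T) : set T :=
  [set y | ~ P y -> ~ L (P `|` [set y])].

Section Span.
Variables (T : Type) (Fam : set (set T)).

Lemma sub_span P : P `<=` span Fam P.
Proof. by move=> y Py /(_ Py). Qed.

Lemma not_span P y : ~ span Fam P y -> ~ P y /\ Fam (P `|` [set y]).
Proof.
move=> nPy; split => [Py|]; first by apply: nPy => /(_ Py).
by apply: contrapT => nFamPy; apply: nPy.
Qed.

Lemma maximal_in_span B y : maximal_in Fam B -> span Fam B y.
Proof.
move=> [_ Bmax] nBy FamBy; apply: nBy.
by rewrite -(Bmax _ FamBy (@subsetUl _ B [set y])); right.
Qed.

Hypothesis Fam_sub : forall S S', Fam S -> S' `<=` S -> Fam S'.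

Lemma spanS P P' : P `<=` P' -> span Fam P `<=` span Fam P'.
Proof.
move=> PP' y Py nP'y FamP'y; apply: Py; first by move/PP'.
by apply: Fam_sub FamP'y _ => x [/PP'|->]; [left|right].
Qed.

Lemma span_maximal_in A : Fam A -> (forall y, span Fam A y) -> maximal_in Fam A.
Proof.
move=> FamA Aspan; split => // S FamS AS; apply/seteqP; split => // x Sx.
apply: contrapT => nAx; apply: (Aspan x nAx).
by apply: Fam_sub FamS _ => y [/AS|->].
Qed.

End Span.

Section Matroid.
Variables (T : Type) (E : set T) (L : set (set T)).
Hypothesis hM : is_matroid E L.

Lemma sub_indep S S' : L S -> S' `<=` S -> L S'.
Proof. exact: indep_subset hM S S'. Qed.

Lemma indep_ground S : L S -> S `<=` E.
Proof. exact: indep_sub_ground hM S. Qed.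

Lemma extend_base B : L B -> exists2 B', maximal_in L B' & B `<=` B'.
Proof.
move=> LB.
have [M [[LM [BM ME]] Mmax]] := indep_max hM LB (indep_ground LB) (@subset_refl _ E).
exists M => //; split => // S LS MS; apply: Mmax => //.
by split => //; split; [exact: subset_trans MS|exact: indep_ground].
Qed.

Lemma extend_basis A X : L A -> A `<=` X -> X `<=` E ->
  exists M, [/\ L M, A `<=` M, M `<=` X & X `<=` span L M].
Proof.
move=> LA AX XE; have [M [[LM [AM MX]] Mmax]] := indep_max hM LA AX XE.
exists M; split => // y Xy nMy LMy; apply: nMy.
suff <- : M `|` [set y] = M by right.
apply: Mmax; last exact: subsetUl.
by split => //; split; [move=> x /AM; left|move=> x [/MX|->]].
Qed.

Lemma spanning_base B A : maximal_in L B -> L A -> B `<=` span L A -> maximal_in L A.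
Proof.
move=> Bbase LA BA; apply: contrapT => nAbase.
have [b [Bb [nAb LAb]]] := indep_augment hM Bbase LA nAbase.
exact: BA b Bb nAb LAb.
Qed.

(* Augmentation is only available against bases: [V], [B `|` G] and [A `|` G] are
   bases in turn, each spanning the previous one, and then [V = A `|` G] misses [z]. *)
Lemma mutual_span_sub A B : L A -> L B -> B `<=` span L A -> A `<=` span L B ->
  span L B `<=` span L A.
Proof.
move=> LA LB BA AB z Bz nAz LAz.
have AzB : A `|` [set z] `<=` span L B by move=> x [/AB|->].
have [B' B'base BB'] := extend_base LB.
have AzB'E : (A `|` [set z]) `|` B' `<=` E.
  by move=> x [/(indep_ground LAz)|/(indep_ground (proj1 B'base))].
have [V [LV AzV VAzB' AzB'V]] := extend_basis LAz (@subsetUl _ _ B') AzB'E.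
have Vbase : maximal_in L V.
  by apply: (spanning_base B'base LV) => b B'b; apply: AzB'V; right.
pose G := V `\` (A `|` [set z]).
have LBG : L (B `|` G).
  apply: (sub_indep (proj1 B'base)) => x [/BB'//|[/VAzB' []//]].
have BGbase : maximal_in L (B `|` G).
  apply: (spanning_base Vbase LBG) => v Vv nBGv.
  have Azv : (A `|` [set z]) v by apply: contrapT => nAzv; apply: nBGv; right.
  exact: (spanS (indep_subset hM) (@subsetUl _ B G) (AzB v Azv) nBGv).
have LAG : L (A `|` G) by apply: (sub_indep LV) => x [Ax|[]//]; apply: AzV; left.
have AGbase : maximal_in L (A `|` G).
  apply: (spanning_base BGbase LAG) => w [Bw|Gw] nAGw; last by case: nAGw; right.
  exact: (spanS (indep_subset hM) (@subsetUl _ A G) (BA w Bw) nAGw).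
have VAG : V = A `|` G by apply: (proj2 AGbase) => // x [Ax|[]//]; apply: AzV; left.
have : (A `|` G) z by rewrite -VAG; apply: AzV; right.
by case=> [//|[_]]; apply; right.
Qed.

Lemma span_trans P Q : L P -> L Q -> Q `<=` span L P -> span L Q `<=` span L P.
Proof.
move=> LP LQ QP y Qy nPy LPy.
have [Qy'|nQy] := pselect (Q y); first exact: QP y Qy' nPy LPy.
pose Y := (P `|` Q) `|` [set y].
have YE : Y `<=` E.
  move=> x [[/(indep_ground LP)|/(indep_ground LQ)]//|->].
  by apply: (indep_ground LPy); right.
have [W [LW QW WY YW]] := extend_basis LQ (fun x Qx => or_introl (or_intror Qx)) YE.
have nWy : ~ W y by move=> Wy; apply: (Qy nQy); apply: (sub_indep LW) => x [/QW|->].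
have WP : W `<=` span L P.
  move=> x Wx; case: (WY x Wx) => [[Px|Qx]|xy]; [exact: sub_span|exact: QP|].
  by case: nWy; rewrite -xy.
have PW : P `<=` span L W by move=> x Px; apply: YW; left; left.
exact: mutual_span_sub LP LW WP PW y (YW y (or_intror erefl)) nPy LPy.
Qed.

Lemma exchange_card_le J K : L J -> L K -> K `<=` span L J -> card_le (K `\` J) (J `\` K).
Proof.
move=> LJ.
have step K' x : L K' -> K' `<=` span L J -> K' x -> ~ J x ->
    exists b, [/\ J b, ~ K' b & L ((K' `\ x) `|` [set b])].
  move=> LK' K'J K'x nJx; apply: contrapT => noexch.
  have LK'x : L (K' `\ x) by apply: (sub_indep LK') => y [].
  have JK'x : J `<=` span L (K' `\ x).
    move=> b Jb nK'xb LK'xb; apply: noexch; exists b; split => // K'b.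
    by apply: nK'xb; split => // bx; apply: nJx; rewrite -bx.
  apply: (span_trans LK'x LJ JK'x (K'J x K'x)); first by case=> _; apply.
  by apply: (sub_indep LK') => y [[]|->].
move=> LK KJ n; elim: n K LK KJ => [|n IH] K LK KJ.
  rewrite !atmost0 => JK x [Kx nJx]; have [b [Jb nKb _]] := step K x LK KJ Kx nJx.
  exact: (JK b).
rewrite !atmostS => JK x [Kx nJx].
have [b [Jb nKb LK']] := step K x LK KJ Kx nJx.
have K'J : (K `\ x) `|` [set b] `<=` span L J by move=> y [[/KJ]//|->]; apply: sub_span.
have JK' : atmost (J `\` ((K `\ x) `|` [set b])) n.
  apply: (sub_atmost (JK b (conj Jb nKb))) => y [Jy nK'y]; split; last first.
    by move=> yb; apply: nK'y; right.
  split => // Ky; apply: nK'y; left; split => // yx; apply: nJx; by rewrite -yx.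
apply: (sub_atmost (IH _ LK' K'J JK')).
by move=> y [[Ky nJy] yx]; split => //; left.
Qed.

Lemma finite_rank_atmost : finite_rank L -> exists R, forall A, L A -> atmost A R.
Proof.
move=> [B [Bbase /finite_atmost[n Bn]]]; exists (n + n) => A LA.
have AB := exchange_card_le (proj1 Bbase) LA (fun y _ => maximal_in_span Bbase).
apply: (sub_atmost (atmostU (AB _ (sub_atmost Bn (@subDsetl _ _ _))) Bn)) => x Ax.
by have [Bx|nBx] := pselect (B x); [right|left].
Qed.

End Matroid.

Lemma nat_boundary (P : nat -> Prop) N : P 0 -> ~ P N -> exists k, P k /\ ~ P k.+1.
Proof.
move=> P0; elim: N => [//|N IH] nPN.
by have [PN|nPN'] := pselect (P N); [exists N|exact: IH].
Qed.

Definition misplaced T (SJ UJ S U : set T) : set T := (S `&` UJ) `|` (U `&` SJ).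

Lemma misplacedC T (SJ UJ S U : set T) : misplaced UJ SJ U S = misplaced SJ UJ S U.
Proof. exact: setUC. Qed.

Definition indep_split T (LF LN : set (set T)) (S U I : set T) :=
  [/\ LF S, LN U, forall x, S x -> ~ U x & I = S `|` U].

Lemma indep_splitC T (LF LN : set (set T)) S U I :
  indep_split LF LN S U I -> indep_split LN LF U S I.
Proof.
by case=> LS LU SU ->; split => // [x Ux Sx|]; [exact: SU x Sx Ux|exact: setUC].
Qed.

Lemma union_indepC T (LF LN : set (set T)) : union_indep LF LN = union_indep LN LF.
Proof.
by apply/seteqP; split => I [S [U [LS [LU ->]]]]; exists U, S; rewrite setUC.
Qed.

Section UnionIndep.
Variables (T : Type) (EF EN : set T) (LF LN : set (set T)).
Hypotheses (hF : is_matroid EF LF) (hN : is_matroid EN LN).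
Local Notation LM := (union_indep LF LN).

Lemma union_indep_sub I I' : LM I -> I' `<=` I -> LM I'.
Proof.
move=> [S [U [LS [LU ->]]]] I'SU; exists (S `&` I'), (U `&` I').
split; first exact: (sub_indep hF LS (@subIsetl _ _ _)).
split; first exact: (sub_indep hN LU (@subIsetl _ _ _)).
by rewrite -setIUl setIidr.
Qed.

Lemma union_indep_split I : LM I -> exists S U, indep_split LF LN S U I.
Proof.
move=> [S [U [LS [LU ->]]]]; exists S, (U `\` S); split => //.
- exact: (sub_indep hN LU (@subDsetl _ _ _)).
- by move=> x Sx [].
- by rewrite setUDr setDv setD0.
Qed.

Lemma split_move I SJ UJ S U y : (forall x, SJ x -> ~ UJ x) ->
  indep_split LF LN S U I -> span LM I y -> SJ y -> ~ S y -> LF (S `|` [set y]) ->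
  exists S' U', [/\ indep_split LF LN S' U' I, misplaced SJ UJ S U y &
    misplaced SJ UJ S' U' `<=` misplaced SJ UJ S U `\ y].
Proof.
move=> SJUJ [LS LU SU IE] Iy SJy nSy LSy.
have Uy : U y.
  apply: contrapT => nUy; apply: Iy; first by rewrite IE => -[].
  by exists (S `|` [set y]), U; split => //; split => //; rewrite IE setUAC.
exists (S `|` [set y]), (U `\ y); split; last 2 first.
- by right.
- move=> x [[[Sx|->] UJx]|[[Ux xy] SJx]]; last by split => //; right.
    by split; [left|move=> xy; apply: nSy; rewrite -xy].
  by case: (SJUJ y SJy UJx).
split => //; first exact: (sub_indep hN LU (@subDsetl _ _ _)).
  by move=> x [Sx|->] [Ux]; [case: (SU x Sx Ux)|apply].
by rewrite IE -setUA setD1K.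
Qed.

End UnionIndep.

Section FiniteRankUnion.
Variables (T : Type) (EF EN : set T) (LF LN : set (set T)).
Hypotheses (hF : is_matroid EF LF) (hN : is_matroid EN LN).
Variable R : nat.
Hypothesis LF_atmost : forall S, LF S -> atmost S R.
Local Notation LM := (union_indep LF LN).

Lemma split_improve I SJ UJ J S U : indep_split LF LN SJ UJ J -> J `<=` span LM I ->
  indep_split LF LN S U I -> ~ (SJ `<=` span LF S /\ UJ `<=` span LN U) ->
  exists S' U' y, [/\ indep_split LF LN S' U' I, misplaced SJ UJ S U y &
    misplaced SJ UJ S' U' `<=` misplaced SJ UJ S U `\ y].
Proof.
move=> [_ _ SJUJ ->] JI sSU; have [SJS|] := pselect (SJ `<=` span LF S); last first.
  move=> /existsNP[y /not_implyP[SJy /(@not_span _ LF)[nSy LSy]]] _.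
  have [S' [U' ?]] := split_move hN SJUJ sSU (JI y (or_introl SJy)) SJy nSy LSy.
  by exists S', U', y.
have [UJU|] := pselect (UJ `<=` span LN U); first by case.
move=> /existsNP[y /not_implyP[UJy /(@not_span _ LN)[nUy LUy]]] _.
have UJSJ x : UJ x -> ~ SJ x by move=> UJx SJx; exact: SJUJ x SJx UJx.
have Iy : span (union_indep LN LF) I y by rewrite -union_indepC; apply: JI; right.
have [U' [S' [sU'S' My M'M]]] :=
  split_move hF UJSJ (indep_splitC sSU) Iy UJy nUy LUy.
exists S', U', y; split; first exact: indep_splitC.
- by rewrite -misplacedC.
- by rewrite -(misplacedC SJ) -(misplacedC SJ UJ S).
Qed.

Lemma split_spanning I SJ UJ J : LM I -> indep_split LF LN SJ UJ J -> J `<=` span LM I ->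
  exists S U, [/\ indep_split LF LN S U I, SJ `<=` span LF S & UJ `<=` span LN U].
Proof.
move=> LMI sJ JI; have [LSJ _ _ _] := sJ.
have [S [U sSU]] := union_indep_split hN LMI.
have Mn : atmost (misplaced SJ UJ S U) (R + R).
  have [LS _ _ _] := sSU; apply: (sub_atmost (atmostU (LF_atmost LS) (LF_atmost LSJ))).
  by move=> x [[Sx _]|[_ SJx]]; [left|right].
elim: (R + R) S U sSU Mn => [|n IH] S U sSU Mn;
  have [[SJS UJU]|] := pselect (SJ `<=` span LF S /\ UJ `<=` span LN U);
  try by exists S, U.
all: move=> /(split_improve sJ JI sSU)[S' [U' [y [sS'U' My M'M]]]].
  by rewrite atmost0 in Mn; case: (Mn y).
rewrite atmostS in Mn; exact: IH S' U' sS'U' (sub_atmost (Mn y My) M'M).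
Qed.

(* Re-split [A `|` [set z]] and then [A] so that the parts of [A] span those of
   [A `|` [set z]] (through [B]); exchange then bounds each part of one split by
   the other, and the element [z] makes one of the bounds strict. *)
Lemma union_indep_augment A B : maximal_in LM B -> LM A -> ~ maximal_in LM A ->
  exists b, B b /\ ~ A b /\ LM (A `|` [set b]).
Proof.
move=> Bbase LMA nAbase; apply: contrapT => noaug.
have BA : B `<=` span LM A.
  by move=> b Bb nAb LMAb; apply: noaug; exists b.
have /existsNP[z /(@not_span _ LM)[nAz LMAz]] : ~ forall y, span LM A y.
  move=> Aspan; apply: nAbase.
  exact: (span_maximal_in (union_indep_sub hF hN) LMA Aspan).
have [Sz [Uz sz]] := union_indep_split hN LMAz.
have [SB [UB [sB SzSB UzUB]]] :=
  split_spanning (proj1 Bbase) sz (fun y _ => maximal_in_span Bbase).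
have [SA [UA [sA SBSA UBUA]]] := split_spanning LMA sB BA.
case: sz sB sA => LSz LUz _ Aze [LSB LUB _ _] [LSA LUA SAUA Ae].
have SzSA := subset_trans SzSB (span_trans hF LSA LSB SBSA).
have UzUA := subset_trans UzUB (span_trans hN LUA LUB UBUA).
have nz x : A x -> x <> z by move=> Ax xz; apply: nAz; rewrite -xz.
have SAfin := sub_atmost (LF_atmost LSA) (@subDsetl _ _ Sz).
apply: (card_le_cycle (exchange_card_le hF LSA LSz SzSA)
  (exchange_card_le hN LUA LUz UzUA) _ _ _ SAfin).
- move=> x [SAx nSzx]; have Ax : A x by rewrite Ae; left.
  have : (Sz `|` Uz) x by rewrite -Aze; left.
  by case=> [/nSzx//|Uzx]; split; [split=> // /(SAUA x SAx)|exact: nz].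
- move=> x [UAx nUzx]; have Ax : A x by rewrite Ae; right.
  have : (Sz `|` Uz) x by rewrite -Aze; left.
  by case=> [Szx|/nUzx//]; split; [split=> // SAx; exact: SAUA x SAx UAx|exact: nz].
- have : (Sz `|` Uz) z by rewrite -Aze; right.
  by case=> [Szz|Uzz]; [left|right]; split=> // ?; apply: nAz; rewrite Ae; [left|right].
Qed.

Definition defect_le (J : set T) n := exists D, [/\ D `<=` J, atmost D n & LN (J `\` D)].

Lemma union_indep_defect J : LM J -> defect_le J R.
Proof.
move=> [S [U [LS [LU ->]]]]; exists S; split; [exact: subsetUl|exact: LF_atmost|].
by apply: (sub_indep hN LU) => x [[]].
Qed.

Lemma defect_le_sub J J' n : J `<=` J' -> defect_le J' n -> defect_le J n.
Proof.
move=> JJ' [D [DJ' Dn LND]]; exists (D `&` J); split; [exact: subIsetr| |].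
  by apply: (sub_atmost Dn); exact: subIsetl.
by apply: (sub_indep hN LND) => x [Jx nDJx]; split; [exact: JJ'|move=> Dx; exact: nDJx].
Qed.

Lemma defect_le_leq J n m : n <= m -> defect_le J n -> defect_le J m.
Proof. by move=> nm [D [DJ Dn LND]]; exists D; split => //; exact: atmost_leq nm Dn. Qed.

Lemma max_defect (fam : set (set T)) J : fam J -> fam `<=` LM ->
  exists k J0, [/\ fam J0, forall n, n < k -> ~ defect_le J0 n &
    forall J', fam J' -> defect_le J' k].
Proof.
move=> famJ famLM.
pose P k := exists J0, fam J0 /\ forall n, n < k -> ~ defect_le J0 n.
have P0 : P 0 by exists J.
have nPR : ~ P R.+1.
  by case=> J0 [/famLM /union_indep_defect J0R noR]; exact: noR R (ltnSn R) J0R.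
have [k [[J0 [famJ0 J0k]] nPk]] := nat_boundary P0 nPR.
exists k, J0; split => // J' famJ'; apply: contrapT => nJ'k; apply: nPk.
exists J'; split => // n; rewrite ltnS => nk J'n; apply: nJ'k.
exact: defect_le_leq nk J'n.
Qed.

(* If [y] lies in the witness [D], then [D `\ y] witnesses a smaller defect of [I];
   otherwise minimality of [k] makes [Us] N-spanned by [I `\` D], hence so is [y],
   although [(I `\` D) `|` [set y]] is N-independent. *)
Lemma defect_le_setU1 I Us y k : LN Us -> Us `<=` I ->
  (forall n, n < k -> ~ defect_le I n) -> defect_le (I `|` [set y]) k ->
  span LN Us y -> I y.
Proof.
move=> LUs UsI Ik [D [DIy Dk LND]] Usy; apply: contrapT => nIy.
have drop c : D c -> D `\ c `<=` I -> LN (I `\` (D `\ c)) -> False.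
  move=> Dc DcI LNc; have [m km Dm] := atmostD1 Dk Dc.
  by apply: (Ik m); [rewrite km|exists (D `\ c)].
have [Dy|nDy] := pselect (D y).
  apply: (drop y Dy); first by move=> x [/DIy[//|xy] nxy]; case: nxy.
  apply: (sub_indep hN LND) => x [Ix nDyx]; split; first by left.
  by move=> Dx; apply: nDyx; split => // xy; apply: nIy; rewrite -xy.
have DI : D `<=` I by move=> x /[dup] Dx /DIy[//|xy]; case: nDy; rewrite -xy.
pose J := I `\` D.
have LJ : LN J by apply: (sub_indep hN LND) => x [Ix nDx]; split => //; left.
have LJy : LN (J `|` [set y]).
  by apply: (sub_indep hN LND) => x [[Ix nDx]|->]; split => //; [left|right].
have UsJ : Us `<=` span LN J.
  move=> c Usc nJc LJc.
  have Dc : D c by apply: contrapT => nDc; apply: nJc; split => //; exact: UsI.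
  apply: (drop c Dc); first by move=> x [/DI].
  apply: (sub_indep hN LJc) => x [Ix nDcx].
  have [->|xc] := pselect (x = c); first by right.
  by left; split => // Dx; apply: nDcx.
exact: (span_trans hN LJ LUs UsJ Usy (fun Jy => nIy (proj1 Jy)) LJy).
Qed.

Lemma union_indep_max A X : LM A -> A `<=` X ->
  exists M, maximal_in [set S | LM S /\ A `<=` S /\ S `<=` X] M.
Proof.
move=> LMA AX; set fam := [set S | _].
have [k [J0 [[LMJ0 [AJ0 J0X]] J0k famk]]] :=
  max_defect (conj LMA (conj (@subset_refl _ A) AX) : fam A) (fun S famS => proj1 famS).
have [S [U [LS LU SU J0e]]] := union_indep_split hN LMJ0.
have UX' : U `<=` (X `\` S) `&` EN.
  move=> x Ux; split; last exact: (indep_ground hN LU).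
  by split; [apply: J0X; rewrite J0e; right|move=> Sx; exact: SU x Sx Ux].
have [Us [LUs UUs UsX' X'Us]] := extend_basis hN LU UX' (@subIsetr _ _ _).
pose I := S `|` Us.
have J0I : J0 `<=` I by rewrite J0e => x [Sx|Ux]; [left|right; exact: UUs].
have IX : I `<=` X by move=> x [Sx|/UsX'[[]]//]; apply: J0X; rewrite J0e; left.
exists I; split => [|K [LMK [AK KX]] IK].
  by split; [exists S, Us|split=> //; exact: subset_trans J0I].
apply/seteqP; split => // y Ky; have [Sy|nSy] := pselect (S y); first by left.
apply: (defect_le_setU1 (k := k) LUs (@subsetUr _ S Us)).
- by move=> n nk /(defect_le_sub J0I); exact: J0k.
- apply: famk; split; first by apply: (union_indep_sub hF hN LMK) => x [/IK|->].
  by split; [move=> x /AJ0 /J0I; left|move=> x [/IX|->]; [|exact: KX]].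
- move=> nUsy LUsy; apply: (X'Us y _ nUsy LUsy).
  by split; [split; [exact: KX|]|apply: (indep_ground hN LUsy); right].
Qed.

Lemma union_is_matroid : is_matroid (EF `|` EN) LM.
Proof.
split.
- move=> I [S [U [LS [LU ->]]]] x [Sx|Ux].
    by left; exact: (indep_ground hF LS).
  by right; exact: (indep_ground hN LU).
- exists set0, set0; rewrite setU0.
  by split; [exact: indep_empty hF|split; [exact: indep_empty hN|]].
- exact: (union_indep_sub hF hN).
- exact: union_indep_augment.
- by move=> A X LMA AX _; exact: union_indep_max.
Qed.

End FiniteRankUnion.

Theorem theorem3p5p1 (T : Type) (EF : set T) (LF : set (set T))
    (EN : set T) (LN : set (set T)) :
  is_matroid EF LF -> finite_rank LF -> is_matroid EN LN ->
  is_matroid (EF `|` EN) (union_indep LF LN).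
Proof.
move=> hF /(finite_rank_atmost hF)[R LF_atmost] hN.
exact: (union_is_matroid hF hN LF_atmost).
Qed.
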